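(* Let $n\geq 0$, let $\sigma_1,\ldots,\sigma_{n+1}\in\Sigma^*$ and $L_1,\ldots,L_n\subseteq\Sigma^*$, and let $L=\sigma_{n+1}L_n^*\sigma_nL_{n-1}^*\cdots\sigma_2L_1^*\sigma_1$. Then $$\mathrm{cl}\,\mathrm{conv}\,\xi(L)=\mathrm{cl}\,\mathrm{conv}\Big(\xi(\{\sigma_{n+1}\sigma_n\cdots\sigma_1\})\cup\bigcup_{i=1}^n\Gamma^{-1}_{\sigma_i\sigma_{i-1}\cdots\sigma_1}\big(\mathrm{cl}\,\mathrm{conv}\,\xi(L_i)\big)\Big).$$
   Context: Fix an integer base $r\geq 2$ and a dimension $m\geq 1$. Let $\Sigma=\{0,1,\ldots,r-1\}^m$, $\Sigma^*$ the set of finite words over $\Sigma$, $\epsilon$ the empty word, $|\sigma|$ the length of $\sigma$. For $\sigma=b_1\cdots b_k\in\Sigma^*$ define $\rho(\sigma)=\sum_{i=1}^k r^{i-1}b_i\in\mathbb{N}^m$ ($\rho(\epsilon)=0$). For $\sigma\in\Sigma^*$, $\Gamma_\sigma:\mathbb{R}^m\to\mathbb{R}^m$ is $\Gamma_\sigma(x)=r^{|\sigma|}x+\rho(\sigma)$. For a nonempty word $\sigma$, $\xi(\sigma)=\rho(\sigma)/(1-r^{|\sigma|})$; $\xi$ is undefined on $\epsilon$, and for a language $L$, $\xi(L)=\{\xi(\sigma):\sigma\in L,\ \sigma\neq\epsilon\}$ (so $\xi(\{\epsilon\})=\emptyset$). $\mathrm{cl}$ is closure and $\mathrm{conv}$ convex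 hull in $\mathbb{R}^m$. *)

From mathcomp Require Import ssreflect ssrfun ssrbool eqtype ssrnat seq fintype.
From Stdlib Require Import Reals.
Set Implicit Arguments.
Unset Strict Implicit.

Local Open Scope R_scope.

Definition vec (m : nat) := 'I_m -> R.
Definition vset (m : nat) := vec m -> Prop.

(* Alphabet Sigma = {0,...,r-1}^m and words over it. *)
Definition letter (r m : nat) := 'I_m -> 'I_r.
Definition word (r m : nat) := seq (letter r m).
Definition lang (r m : nat) := word r m -> Prop.

(* rho(b_1 ... b_k) = sum_i r^(i-1) b_i  (Horner form, b_1 first). *)
Fixpoint rho (r m : nat) (w : word r m) : vec m :=
  fun j => match w with
           | [::] => 0
           | b :: w' => INR (nat_of_ord (b j)) + INR r * rho w' j
           end.

Definition Gamma (r m : nat) (w : word r m) (x : vec m) : vec m :=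
  fun j => INR r ^ size w * x j + rho w j.

Definition Gamma_inv_set (r m : nat) (w : word r m) (S : vset m) : vset m :=
  fun x => S (Gamma w x).

(* xi(sigma) = rho(sigma)/(1 - r^|sigma|) (used only for nonempty sigma). *)
Definition xi (r m : nat) (w : word r m) : vec m :=
  fun j => rho w j / (1 - INR r ^ size w).

Definition xi_set (r m : nat) (L : lang r m) : vset m :=
  fun x => exists w, L w /\ w <> [::] /\ (forall j, x j = xi w j).

Fixpoint sumR (k : nat) (f : nat -> R) : R :=
  match k with
  | O => 0
  | S k' => sumR k' f + f k'
  end.

Definition conv (m : nat) (S : vset m) : vset m :=
  fun x => exists (k : nat) (c : nat -> R) (p : nat -> vec m),
    (forall i, (i < k)%nat -> 0 <= c i /\ S (p i)) /\
    sumR k c = 1 /\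
    (forall j, x j = sumR k (fun i => c i * p i j)).

Definition cl (m : nat) (S : vset m) : vset m :=
  fun x => forall eps, 0 < eps ->
    exists y, S y /\ (forall j, Rabs (x j - y j) < eps).

Definition set_eq (m : nat) (A B : vset m) : Prop := forall x, A x <-> B x.

Definition set_union (m : nat) (A B : vset m) : vset m := fun x => A x \/ B x.

Definition bigunion (m : nat) (n : nat) (F : nat -> vset m) : vset m :=
  fun x => exists i, (1 <= i)%nat /\ (i <= n)%nat /\ F i x.

Definition singleton_lang (r m : nat) (w : word r m) : lang r m := fun v => v = w.

Definition concat_lang (r m : nat) (A B : lang r m) : lang r m :=
  fun w => exists u v, A u /\ B v /\ w = u ++ v.

Definition star (r m : nat) (L : lang r m) : lang r m :=
  fun w => exists ws : seq (word r m),
    (forall i, (i < size ws)%nat -> L (nth [::] ws i)) /\ w = flatten ws.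

(* With sigma 1, ..., sigma (n+1) and Ls 1, ..., Ls n:
   Lbuild 0     = {sigma_1}
   Lbuild (k+1) = sigma_(k+2) Ls_(k+1)^* (Lbuild k),
   so Lbuild n = sigma_(n+1) L_n^* sigma_n L_(n-1)^* ... sigma_2 L_1^* sigma_1. *)
Fixpoint Lbuild (r m : nat) (sigma : nat -> word r m) (Ls : nat -> lang r m)
    (k : nat) : lang r m :=
  match k with
  | O => singleton_lang (sigma 1%nat)
  | S k' => concat_lang (singleton_lang (sigma (k' + 2)%nat))
             (concat_lang (star (Ls (k' + 1)%nat)) (Lbuild sigma Ls k'))
  end.

Fixpoint prefw (r m : nat) (sigma : nat -> word r m) (i : nat) : word r m :=
  match i with
  | O => [::]
  | S i' => sigma i ++ prefw sigma i'
  end.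

(* Write P_i = sigma_i ... sigma_1 and Ginv w = Gamma_w^-1.  Two facts drive the
   proof: Ginv (uv) = Ginv v o Ginv u, and for w nonempty Ginv w is a homothety
   of ratio r^-|w| <= 1/2 centred at its fixed point xi w.

   (1) cl conv xi(L) is contained in the right-hand side.  Let K be the convex
   hull of the generators xi(P_(n+1)) and Ginv P_i (xi l), l in L_i.  Reading
   a word of L from the right and using convexity, K is invariant under
   Ginv w for every w in L; iterating the contraction Ginv w from any point of
   K converges to xi w, so xi w lies in cl K.  Each generator of K belongs to
   the right-hand side since Gamma_(P_i) (Ginv P_i (xi l)) = xi l.
   (2) The converse.  xi(P_(n+1)) is in xi(L), and Ginv P_i (xi l) is the limit
   of xi(q l^k P_i), where the pumped words q l^k P_i lie in L.  Since
   Ginv P_i is a homothety of ratio at most 1, it maps cl conv xi(L_i) into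
   cl conv of the image, which is therefore inside cl conv xi(L). *)

Set Warnings "-notation-overridden".
From mathcomp Require Import ssreflect ssrfun ssrbool eqtype ssrnat seq fintype.
From mathcomp Require Import zify.
From Stdlib Require Import Reals Lra FunctionalExtensionality.
Set Implicit Arguments.
Unset Strict Implicit.
Local Open Scope R_scope.

Lemma sumR_ext k f g : (forall i, (i < k)%nat -> f i = g i) -> sumR k f = sumR k g.
Proof.
elim: k => [|k IH] Hfg //=.
by rewrite IH ?Hfg // => i Hi; apply: Hfg; lia.
Qed.

Lemma sumR_scal k a f : sumR k (fun i => a * f i) = a * sumR k f.
Proof. by elim: k => [|k IH] /=; [ring | rewrite IH; ring]. Qed.

Lemma sumR_plus k f g : sumR k (fun i => f i + g i) = sumR k f + sumR k g.
Proof. by elim: k => [|k IH] /=; [ring | rewrite IH; ring]. Qed.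

Lemma sumR_split k1 k2 f :
  sumR (k1 + k2) f = sumR k1 f + sumR k2 (fun i => f (k1 + i)%nat).
Proof.
elim: k2 => [|k2 IH] /=; first by rewrite addn0; ring.
by rewrite addnS /= IH; ring.
Qed.

Lemma sumR_ge0 k f : (forall i, (i < k)%nat -> 0 <= f i) -> 0 <= sumR k f.
Proof.
elim: k => [|k IH] Hf /=; first lra.
have := Hf k (ltnSn k); have := IH (fun i Hi => Hf i (ltnW Hi)); lra.
Qed.

Lemma sumR_eq0 k f : (forall i, (i < k)%nat -> 0 <= f i) -> sumR k f = 0 ->
  forall i, (i < k)%nat -> f i = 0.
Proof.
elim: k => [|k IH] Hf //= Hsum i Hi.
have Hfk := Hf k (ltnSn k).
have Hrest := sumR_ge0 (fun i Hi => Hf i (ltnW Hi)).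
case: (ltngtP i k) => [Hik||->]; [|lia|lra].
by apply: IH => // [j Hj|]; [apply: Hf; lia | lra].
Qed.

Definition juxt (A : Type) (k1 : nat) (f g : nat -> A) : nat -> A :=
  fun i => if (i < k1)%nat then f i else g (i - k1)%nat.

Lemma sumR_juxt k1 k2 f g : sumR (k1 + k2) (juxt k1 f g) = sumR k1 f + sumR k2 g.
Proof.
rewrite sumR_split (@sumR_ext k1 _ f) => [|i Hi]; last by rewrite /juxt Hi.
congr (_ + _); apply: sumR_ext => i _.
by rewrite /juxt ltnNge leq_addr /= addKn.
Qed.

Section HullAndClosure.
Variable m : nat.
Implicit Types S T : vset m.

Definition convex_set T : Prop := forall a b t x, T a -> T b -> 0 <= t <= 1 ->
  (forall j, x j = t * a j + (1 - t) * b j) -> T x.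

Lemma conv_incl S x : S x -> conv S x.
Proof.
move=> Sx; exists 1%nat, (fun _ => 1), (fun _ => x).
by split; [move=> i _; split; [lra|] | split => [|j] /=; ring].
Qed.

Lemma conv_mono S T x : (forall y, S y -> T y) -> conv S x -> conv T x.
Proof.
move=> ST [k [c [p [Hcp Hx]]]]; exists k, c, p; split => // i Hi.
by case: (Hcp i Hi) => Hc Hp; split => //; apply: ST.
Qed.

(* Two convex combinations are merged by juxtaposing them with weights t, 1-t. *)
Lemma conv_convex S : convex_set (conv S).
Proof.
move=> a b t x [k1 [c1 [p1 [Hcp1 [Hc1 Ha]]]]] [k2 [c2 [p2 [Hcp2 [Hc2 Hb]]]]] Ht Hx.
exists (k1 + k2)%nat, (juxt k1 (fun i => t * c1 i) (fun i => (1 - t) * c2 i)),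
  (juxt k1 p1 p2).
split; last split.
- move=> i Hi; rewrite /juxt; case: (ltnP i k1) => Hik.
  + by case: (Hcp1 i Hik) => ??; split => //; apply: Rmult_le_pos; lra.
  + have Hi2 : (i - k1 < k2)%nat by lia.
    by case: (Hcp2 _ Hi2) => ??; split => //; apply: Rmult_le_pos; lra.
- by rewrite sumR_juxt !sumR_scal Hc1 Hc2; ring.
- move=> j; rewrite (@sumR_ext _ _ (juxt k1 (fun i => t * (c1 i * p1 i j))
                                      (fun i => (1 - t) * (c2 i * p2 i j)))).
  + by rewrite sumR_juxt !sumR_scal Hx Ha Hb.
  + by move=> i _; rewrite /juxt; case: (i < k1)%nat; ring.
Qed.

Lemma conv_least S T x : convex_set T -> (forall y, S y -> T y) -> conv S x -> T x.
Proof.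
move=> HT ST [k [c [p [Hcp [Hc Hx]]]]].
elim: k c p x Hcp Hc Hx => [|k IH] c p x Hcp /= Hc Hx; first lra.
have [Hck Hpk] := Hcp k (ltnSn k).
have Hc_ge0 i : (i < k)%nat -> 0 <= c i by move=> Hi; case: (Hcp i (ltnW Hi)).
have Hp_in i : (i < k)%nat -> S (p i) by move=> Hi; case: (Hcp i (ltnW Hi)).
case: (Req_dec (c k) 1) => Hck1.
-
  have Hz := sumR_eq0 Hc_ge0 (ltac:(lra) : sumR k c = 0).
  suff -> : x = p k by apply: ST.
  apply: functional_extensionality => j; rewrite Hx.
  rewrite (@sumR_ext k _ (fun i => 0 * p i j)) => [|i Hi]; last by rewrite Hz.
  by rewrite sumR_scal Hck1; ring.
- (* x is a two-point combination of p k and the renormalised rest *)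
  have Hs : 0 < 1 - c k by have := sumR_ge0 Hc_ge0; lra.
  pose y j := sumR k (fun i => c i / (1 - c k) * p i j).
  have Ty : T y.
    apply: (IH (fun i => c i / (1 - c k)) p) => //.
    + move=> i Hi; split; last exact: Hp_in.
      by apply: Rmult_le_pos; [apply: Hc_ge0 | apply/Rlt_le/Rinv_0_lt_compat].
    + rewrite (@sumR_ext k _ (fun i => / (1 - c k) * c i)) => [|i _]; last first.
        by rewrite /Rdiv Rmult_comm.
      by rewrite sumR_scal (_ : sumR k c = 1 - c k); [field|]; lra.
  apply: (HT y (p k) (1 - c k)) => //; [exact: ST | lra | move=> j].
  rewrite Hx /y (@sumR_ext k (fun i => c i / (1 - c k) * p i j)
                            (fun i => / (1 - c k) * (c i * p i j))) => [|i _].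
  + by rewrite sumR_scal; field; lra.
  + by rewrite /Rdiv; ring.
Qed.

Lemma cl_incl S x : S x -> cl S x.
Proof. by move=> Sx eps He; exists x; split => // j; rewrite Rminus_diag Rabs_R0. Qed.

Lemma cl_mono S T x : (forall y, S y -> T y) -> cl S x -> cl T x.
Proof.
by move=> ST H eps He; case: (H eps He) => y [Sy Hy]; exists y; split => //; apply: ST.
Qed.

Lemma cl_idem S x : cl (cl S) x -> cl S x.
Proof.
move=> H eps He; case: (H (eps / 2) ltac:(lra)) => y [Hy Hxy].
case: (Hy (eps / 2) ltac:(lra)) => z [Sz Hyz]; exists z; split => // j.
have := Rabs_triang (x j - y j) (y j - z j).
have := Hxy j; have := Hyz j.
have -> : x j - y j + (y j - z j) = x j - z j by ring.
lra.
Qed.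

Lemma cl_convex T : convex_set T -> convex_set (cl T).
Proof.
move=> HT a b t x Ha Hb Ht Hx eps He.
case: (Ha eps He) => a' [Ta' Ha']; case: (Hb eps He) => b' [Tb' Hb'].
exists (fun j => t * a' j + (1 - t) * b' j); split; first exact: (HT a' b' t).
move=> j; rewrite Hx.
have -> : t * a j + (1 - t) * b j - (t * a' j + (1 - t) * b' j)
   = t * (a j - a' j) + (1 - t) * (b j - b' j) by ring.
apply: Rle_lt_trans (Rabs_triang _ _) _.
rewrite !Rabs_mult (Rabs_pos_eq t) ?(Rabs_pos_eq (1 - t)); try lra.
have := Rmax_l (Rabs (a j - a' j)) (Rabs (b j - b' j)).
have := Rmax_r (Rabs (a j - a' j)) (Rabs (b j - b' j)).
have := Rmax_lub_lt _ _ _ (Ha' j) (Hb' j); nra.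
Qed.

Lemma clconv_least S T x :
  (forall y, S y -> cl (conv T) y) -> cl (conv S) x -> cl (conv T) x.
Proof.
move=> ST H; apply: cl_idem; apply: cl_mono H => y.
exact: conv_least (cl_convex (@conv_convex T)) ST.
Qed.

Lemma clconv_homothety (f : vec m -> vec m) (a : R) (b : vec m) S z :
  0 < a <= 1 -> (forall x j, f x j = a * x j + b j) ->
  cl (conv S) z -> cl (conv (fun v => exists u, S u /\ v = f u)) (f z).
Proof.
move=> Ha Hf Hz eps He; case: (Hz eps He) => y [[k [c [p [Hcp [Hc Hy]]]]] Hzy].
exists (f y); split.
- exists k, c, (fun i => f (p i)); split; last split => //.
  + by move=> i Hi; case: (Hcp i Hi) => ? ?; split => //; exists (p i).
  + move=> j; rewrite Hf Hy (@sumR_ext k (fun i => c i * f (p i) j)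
                                         (fun i => a * (c i * p i j) + b j * c i)).
    * by rewrite sumR_plus sumR_scal sumR_scal Hc; ring.
    * by move=> i _; rewrite Hf; ring.
- move=> j; rewrite !Hf.
  have -> : a * z j + b j - (a * y j + b j) = a * (z j - y j) by ring.
  rewrite Rabs_mult Rabs_pos_eq; last lra.
  have := Hzy j; have := Rabs_pos (z j - y j); nra.
Qed.

End HullAndClosure.

Lemma pow_ge_succ (y : R) k : 2 <= y -> INR k + 1 <= y ^ k.
Proof.
move=> Hy; elim: k => [|k IH]; first by rewrite /=; lra.
rewrite S_INR /=; have := pos_INR k; nra.
Qed.

Lemma fin_bound m (f : 'I_m -> R) : exists B, forall j, f j <= B.
Proof.
exists (foldr Rmax 0 (map f (enum 'I_m))) => j.
have : j \in enum 'I_m by rewrite mem_enum.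
elim: (enum 'I_m) => [//|i s IH] /=.
rewrite in_cons => /orP [/eqP ->|Hs]; first exact: Rmax_l.
exact: Rle_trans (IH Hs) (Rmax_r _ _).
Qed.

Lemma small_quotient B eps : 0 < eps -> exists k, (0 < k)%nat /\
  forall E D, Rabs E <= B -> INR k <= Rabs D -> Rabs (E / D) < eps.
Proof.
move=> He; case: (INR_unbounded (B / eps)) => k Hk.
exists k.+1; split => // E D HE HD.
have HB : B < eps * INR k.+1.
  rewrite S_INR; have := pos_INR k.
  have -> : B = eps * (B / eps) by field; lra.
  nra.
have HD0 : 0 < Rabs D by have := pos_INR k; rewrite S_INR in HD; lra.
rewrite /Rdiv Rabs_mult Rabs_inv.
apply: (Rmult_lt_reg_r (Rabs D)) => //.
rewrite Rmult_assoc Rinv_l ?Rmult_1_r; nra.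
Qed.

Section AffineMaps.
Variables (r m : nat).
Hypothesis hr : (2 <= r)%nat.

Definition Ginv (w : word r m) (y : vec m) : vec m :=
  fun j => (y j - rho w j) / INR r ^ size w.

Lemma pow_r_ge_succ k : INR k + 1 <= INR r ^ k.
Proof. by apply: pow_ge_succ; have /le_INR := leP hr. Qed.

Lemma pow_r_ge1 k : 1 <= INR r ^ k.
Proof. by have := pow_r_ge_succ k; have := pos_INR k; lra. Qed.

Lemma pow_r_pos k : 0 < INR r ^ k.
Proof. by have := pow_r_ge1 k; lra. Qed.

Lemma pow_r_ge2 (w : word r m) : w <> [::] -> 2 <= INR r ^ size w.
Proof.
case: w => [//|b w] _; have := pow_r_ge_succ (size w).+1.
change (size (b :: w)) with (size w).+1.
by rewrite S_INR; have := pos_INR (size w); lra.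
Qed.

Lemma rho_cat (u v : word r m) j : rho (u ++ v) j = rho u j + INR r ^ size u * rho v j.
Proof. by elim: u => [|b u IH] /=; [ring | rewrite IH; ring]. Qed.

Lemma Ginv_nil y : Ginv [::] y = y.
Proof. by apply: functional_extensionality => j; rewrite /Ginv /=; field. Qed.

(* Gamma_(uv) = Gamma_u o Gamma_v, hence Gamma_(uv)^-1 = Gamma_v^-1 o Gamma_u^-1. *)
Lemma Ginv_cat u v y : Ginv v (Ginv u y) = Ginv (u ++ v) y.
Proof.
apply: functional_extensionality => j; rewrite /Ginv rho_cat size_cat pow_add.
by have := pow_r_pos (size u); have := pow_r_pos (size v) => ? ?; field; lra.
Qed.

Lemma Gamma_Ginv w x : Gamma w (Ginv w x) = x.
Proof.
apply: functional_extensionality => j; rewrite /Gamma /Ginv.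
by have := pow_r_pos (size w) => ?; field; lra.
Qed.

Lemma Ginv_Gamma w x : Ginv w (Gamma w x) = x.
Proof.
apply: functional_extensionality => j; rewrite /Gamma /Ginv.
by have := pow_r_pos (size w) => ?; field; lra.
Qed.

Lemma Ginv_ratio (w : word r m) : 0 < / INR r ^ size w <= 1.
Proof.
have := pow_r_ge1 (size w) => H; split; first by apply: Rinv_0_lt_compat; lra.
by rewrite -Rinv_1; apply: Rinv_le_contravar; lra.
Qed.

Lemma Ginv_homothety w x j :
  Ginv w x j = / INR r ^ size w * x j + - rho w j / INR r ^ size w.
Proof. by rewrite /Ginv; have := pow_r_pos (size w) => ?; field; lra. Qed.

Lemma Ginv_comb w a b t (x : vec m) :
  (forall j, x j = t * a j + (1 - t) * b j) ->
  forall j, Ginv w x j = t * Ginv w a j + (1 - t) * Ginv w b j.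
Proof. by move=> Hx j; rewrite !Ginv_homothety Hx; ring. Qed.

(* The defining relation of xi, valid since r^|w| <> 1 for w nonempty. *)
Lemma rho_xi (w : word r m) j : w <> [::] -> rho w j = xi w j * (1 - INR r ^ size w).
Proof. by move/pow_r_ge2 => ?; rewrite /xi; field; lra. Qed.

(* xi w is the centre of the homothety Gamma_w^-1. *)
Lemma Ginv_toward_xi w y j : w <> [::] ->
  Ginv w y j = / INR r ^ size w * y j + (1 - / INR r ^ size w) * xi w j.
Proof.
move=> Hw; rewrite /Ginv (rho_xi j Hw).
by have := pow_r_ge2 Hw => ?; field; lra.
Qed.

Lemma iter_Ginv w y k j : w <> [::] ->
  iter k (Ginv w) y j = xi w j + (y j - xi w j) / (INR r ^ size w) ^ k.
Proof.
move=> Hw; elim: k => [|k IH] /=; first by field.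
rewrite Ginv_toward_xi // IH.
have := pow_r_pos (size w); have := pow_lt _ k (pow_r_pos (size w)) => ? ?.
by field; lra.
Qed.

(* A nonempty set invariant under Gamma_w^-1 has xi w in its closure:
   the iterates of any of its points converge to the centre xi w. *)
Lemma xi_adherent (K : vset m) w y : w <> [::] -> K y ->
  (forall z, K z -> K (Ginv w z)) -> cl K (xi w).
Proof.
move=> Hw Ky Hinv eps He.
have [B HB] := fin_bound (fun j => Rabs (y j - xi w j)).
have [k [_ Hk]] := small_quotient B He.
exists (iter k (Ginv w) y); split; first by elim: k {Hk} => [|k IH] //=; apply: Hinv.
move=> j; rewrite iter_Ginv //.
have -> : xi w j - (xi w j + (y j - xi w j) / (INR r ^ size w) ^ k)
  = - ((y j - xi w j) / (INR r ^ size w) ^ k) by ring.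
rewrite Rabs_Ropp; apply: Hk; first exact: HB.
rewrite Rabs_pos_eq; last by apply/pow_le/Rlt_le/pow_r_pos.
have := pow_ge_succ k (pow_r_ge2 Hw); lra.
Qed.

Lemma rho_power (l : word r m) k j : l <> [::] ->
  rho (flatten (nseq k l)) j = xi l j * (1 - (INR r ^ size l) ^ k).
Proof.
move=> Hl; elim: k => [|k IH] /=; first ring.
by rewrite rho_cat IH (rho_xi j Hl); ring.
Qed.

Lemma size_power (l : word r m) k : size (flatten (nseq k l)) = (size l * k)%nat.
Proof. by elim: k => [|k IH] /=; rewrite ?muln0 // size_cat IH mulnS. Qed.

Lemma xi_pump (q P l : word r m) : l <> [::] -> forall eps, 0 < eps ->
  exists k, (0 < k)%nat /\ forall j,
    Rabs (Ginv P (xi l) j - xi (q ++ flatten (nseq k l) ++ P) j) < eps.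
Proof.
move=> Hl eps He.
have [B HB] := fin_bound (fun j => Rabs (rho q j + INR r ^ size q * xi l j
                                         + (rho P j - xi l j) / INR r ^ size P)).
have [k [Hk0 Hk]] := small_quotient B He.
exists k; split => // j.
have -> : xi (q ++ flatten (nseq k l) ++ P) j =
    (rho q j + INR r ^ size q * (xi l j * (1 - (INR r ^ size l) ^ k)
                                 + (INR r ^ size l) ^ k * rho P j))
    / (1 - INR r ^ size q * ((INR r ^ size l) ^ k * INR r ^ size P)).
  by rewrite {1}/xi !rho_cat !size_cat !pow_add rho_power // size_power pow_mult.
have Hk0' : 0 < INR k by apply: lt_0_INR; apply/ltP.
have HRq := pow_r_ge1 (size q); have HRP := pow_r_ge1 (size P).
have HX := pow_ge_succ k (pow_r_ge2 Hl); have HBj := HB j.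
move: HRq HRP HX HBj; rewrite /Ginv.
move: (INR r ^ size q) (INR r ^ size P) ((INR r ^ size l) ^ k) => Rq RP X HRq HRP HX.
move: (rho q j) (rho P j) (xi l j) => rq rP xl HBj.
have HqP : 1 <= Rq * RP by nra.
have Hden : INR k <= Rq * RP * X - 1 by nra.
have -> : (xl - rP) / RP - (rq + Rq * (xl * (1 - X) + X * rP)) / (1 - Rq * (X * RP))
        = (rq + Rq * xl + (rP - xl) / RP) / (Rq * RP * X - 1).
  by field; repeat split; lra.
by apply: Hk; [exact: HBj | rewrite Rabs_pos_eq; lra].
Qed.

Lemma Ginv_star_invariant (E : vset m) (L : lang r m) :
  (forall l z, L l -> E z -> E (Ginv l z)) ->
  forall t z, star L t -> E z -> E (Ginv t z).
Proof.
move=> HE t z [ws [Hws ->]]; elim: ws z Hws => [|u ws IH] z Hws Ez /=.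
  by rewrite Ginv_nil.
rewrite -Ginv_cat; apply: IH => [i Hi|]; first exact: (Hws i.+1).
exact: HE (Hws 0%nat isT) Ez.
Qed.

End AffineMaps.

(* Words are functions-valued sequences without decidable equality, so
   emptiness is tested by cases. *)
Lemma seq_nil_or_not (T : Type) (s : seq T) : s = [::] \/ s <> [::].
Proof. by case: s => [|? ?]; [left | right]. Qed.

Lemma flatten_neq_nil (T : Type) (ss : seq (seq T)) : flatten ss <> [::] ->
  exists i, (i < size ss)%nat /\ nth [::] ss i <> [::].
Proof.
elim: ss => [|s ss IH] //= Hne.
case: (seq_nil_or_not s) => [Hs|Hs]; last by exists 0%nat.
by rewrite Hs /= in Hne; case: (IH Hne) => i [? ?]; exists i.+1.
Qed.

Section Proposition2.
Variables (r m : nat).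
Hypothesis hr : (2 <= r)%nat.
Variables (n : nat) (sigma : nat -> word r m) (Ls : nat -> lang r m).

Definition generators : vset m := fun x =>
  (prefw sigma n.+1 <> [::] /\ x = xi (prefw sigma n.+1)) \/
  exists i l, (1 <= i)%nat /\ (i <= n)%nat /\ Ls i l /\ l <> [::] /\
    x = Ginv (prefw sigma i) (xi l).

Definition hull : vset m := conv generators.

(* Reading a word of L_i^* between sigma_(i+1) and sigma_i keeps us in the hull:
   Gamma_l^-1 moves z towards xi l, so Gamma_P^-1 moves towards a generator. *)
Lemma hull_Ginv_factor i l z : (1 <= i)%nat -> (i <= n)%nat -> Ls i l ->
  hull (Ginv (prefw sigma i) z) -> hull (Ginv (prefw sigma i) (Ginv l z)).
Proof.
move=> Hi1 Hin Hl Hz; case: (seq_nil_or_not l) => [->|Hne]; first by rewrite Ginv_nil.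
have [Ht0 Ht1] := Ginv_ratio hr l.
apply: (conv_convex (b := Ginv (prefw sigma i) (xi l)) (t := / INR r ^ size l) Hz).
- by apply: conv_incl; right; exists i, l.
- lra.
- by apply: (Ginv_comb hr) => j; apply: (Ginv_toward_xi hr).
Qed.

Lemma hull_Ginv_build k w z : (k <= n)%nat -> Lbuild sigma Ls k w ->
  hull (Ginv (prefw sigma k.+1) z) -> hull (Ginv w z).
Proof.
elim: k w z => [|k IH] w z Hk /=; first by move=> -> ; rewrite cats0.
move=> [u [v [-> [[t [w' [Ht [Hw' ->]]]] ->]]]] Hz.
rewrite -!(Ginv_cat hr); apply: (IH _ _ (ltnW Hk) Hw').
rewrite addn1 in Ht.
apply: (Ginv_star_invariant hr (E := fun y => hull (Ginv (prefw sigma k.+1) y)) _ Ht).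
- by move=> l y Hl Hy; apply: hull_Ginv_factor.
- by rewrite (Ginv_cat hr) addn2.
Qed.

(* Reading sigma_(n+1)...sigma_1 also keeps us in the hull: its image moves towards
   the generator xi(sigma_(n+1)...sigma_1). *)
Lemma hull_Ginv_top z : hull z -> hull (Ginv (prefw sigma n.+1) z).
Proof.
move=> Hz; set s := prefw sigma n.+1.
case: (seq_nil_or_not s) => [->|Hne]; first by rewrite Ginv_nil.
have [Ht0 Ht1] := Ginv_ratio hr s.
apply: (conv_convex (b := xi s) (t := / INR r ^ size s) Hz).
- by apply: conv_incl; left.
- lra.
- by move=> j; apply: (Ginv_toward_xi hr).
Qed.

Lemma hull_Ginv_invariant w z : Lbuild sigma Ls n w -> hull z -> hull (Ginv w z).
Proof. by move=> Hw Hz; apply: (hull_Ginv_build (leqnn n) Hw); apply: hull_Ginv_top. Qed.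

Lemma build_nonempty_source k w : Lbuild sigma Ls k w -> w <> [::] ->
  prefw sigma k.+1 <> [::] \/
  exists i l, (1 <= i)%nat /\ (i <= k)%nat /\ Ls i l /\ l <> [::].
Proof.
elim: k w => [|k IH] w /=; first by move=> -> Hne; left; rewrite cats0.
move=> [u [v [-> [[t [w' [[ws [Hws ->]] [Hw' ->]]] ->]]]]] Hne.
case: (seq_nil_or_not (sigma (k + 2)%nat)) => [Es|Es]; last first.
  by left; rewrite -addn2; case: (sigma (k + 2)%nat) Es.
case: (seq_nil_or_not (flatten ws)) => [Ef|Ef]; last first.
  case: (flatten_neq_nil Ef) => i [Hi Hli]; right; exists k.+1, (nth [::] ws i).
  by do 2 (split => //); split; [rewrite -addn1; apply: Hws | ].
rewrite Es Ef /= in Hne; case: (IH _ Hw' Hne) => [Hp|[i [l [? [? ?]]]]].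
- by left; rewrite /= -addn2 Es.
- by right; exists i, l; split => //; split => //; apply: leqW.
Qed.

Lemma hull_nonempty w : Lbuild sigma Ls n w -> w <> [::] -> exists y, hull y.
Proof.
move=> Hw Hne; case: (build_nonempty_source Hw Hne) => [Hs|[i [l [? [? [? ?]]]]]].
- by exists (xi (prefw sigma n.+1)); apply: conv_incl; left.
- by exists (Ginv (prefw sigma i) (xi l)); apply: conv_incl; right; exists i, l.
Qed.

Lemma xi_build_in_cl_hull w : Lbuild sigma Ls n w -> w <> [::] -> cl hull (xi w).
Proof.
move=> Hw Hne; case: (hull_nonempty Hw Hne) => y Hy.
by apply: (xi_adherent hr Hne Hy) => z; apply: hull_Ginv_invariant.
Qed.

(* sigma_(k+1)...sigma_1 belongs to the k-th stage (take the empty word in each star). *)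
Lemma prefw_build k : Lbuild sigma Ls k (prefw sigma k.+1).
Proof.
elim: k => [|k IH] /=; first by rewrite /singleton_lang cats0.
exists (sigma (k + 2)%nat), (prefw sigma k.+1); rewrite addn2; split => //.
split => //; exists [::], (prefw sigma k.+1).
by split; [exists [::] | split].
Qed.

(* Stages can be added on the left by choosing the empty word in each star. *)
Lemma build_extend k d : exists q, forall u,
  Lbuild sigma Ls k u -> Lbuild sigma Ls (k + d) (q ++ u).
Proof.
elim: d => [|d [q Hq]]; first by exists [::] => u; rewrite addn0.
exists (sigma (k + d + 2)%nat ++ q) => u Hu; rewrite addnS /=.
exists (sigma (k + d + 2)%nat), (q ++ u); rewrite catA; split => //.
split => //; exists [::], (q ++ u).
by split; [exists [::] | split => //; apply: Hq].
Qed.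

Lemma build_pump i l : (1 <= i)%nat -> (i <= n)%nat -> Ls i l ->
  exists q, forall k, Lbuild sigma Ls n (q ++ flatten (nseq k l) ++ prefw sigma i).
Proof.
case: i => [//|i] _ Hin Hl.
case: (build_extend i.+1 (n - i.+1)) => q; rewrite subnKC // => Hq.
exists (q ++ sigma (i + 2)%nat) => k; rewrite -catA; apply: Hq.
exists (sigma (i + 2)%nat), (flatten (nseq k l) ++ prefw sigma i.+1); split => //.
split => //; exists (flatten (nseq k l)), (prefw sigma i.+1).
split; last by split => //; apply: prefw_build.
exists (nseq k l); split => // j; rewrite size_nseq => Hj.
by rewrite nth_nseq Hj addn1.
Qed.

Lemma Ginv_xi_in_cl_build i l : (1 <= i)%nat -> (i <= n)%nat -> Ls i l -> l <> [::] ->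
  cl (xi_set (Lbuild sigma Ls n)) (Ginv (prefw sigma i) (xi l)).
Proof.
move=> Hi1 Hin Hl Hne eps He.
case: (build_pump Hi1 Hin Hl) => q Hq.
case: (xi_pump hr q (prefw sigma i) Hne He) => k [Hk Hclose].
exists (xi (q ++ flatten (nseq k l) ++ prefw sigma i)); split => //.
exists (q ++ flatten (nseq k l) ++ prefw sigma i); split => //; split => //.
have Hpow : flatten (nseq k l) <> [::] by case: (k) Hk => [//|k'] _ /=; case: (l) Hne.
by case: (q) => [|? ?] //=; case: (flatten (nseq k l)) Hpow.
Qed.

Definition rhs_set : vset m :=
  set_union (xi_set (singleton_lang (prefw sigma n.+1)))
    (bigunion n (fun i => Gamma_inv_set (prefw sigma i) (cl (conv (xi_set (Ls i)))))).

(* Each generator lies in the right-hand side, as Gamma_P (Gamma_P^-1 (xi l)) = xi l. *)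
Lemma generators_in_rhs x : generators x -> rhs_set x.
Proof.
case=> [[Hs ->]|[i [l [Hi1 [Hin [Hl [Hne ->]]]]]]]; first by left; exists (prefw sigma n.+1).
right; exists i; do 2 (split => //).
rewrite /Gamma_inv_set (Gamma_Ginv hr); apply/cl_incl/conv_incl.
by exists l.
Qed.

Lemma xi_build_in_clconv_rhs y : xi_set (Lbuild sigma Ls n) y -> cl (conv rhs_set) y.
Proof.
move=> [w [Hw [Hne Hy]]]; have -> : y = xi w by apply: functional_extensionality.
apply: (cl_mono _ (xi_build_in_cl_hull Hw Hne)) => z.
exact: conv_mono generators_in_rhs.
Qed.

Lemma rhs_in_clconv_xi_build y : rhs_set y -> cl (conv (xi_set (Lbuild sigma Ls n))) y.
Proof.
case=> [[w [Hw [Hne Hy]]]|[i [Hi1 [Hin Hy]]]].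
- have -> : y = xi w by apply: functional_extensionality.
  apply/cl_incl/conv_incl; exists w; split => //.
  by rewrite Hw; apply: prefw_build.
- (* Gamma_P^-1 maps cl conv xi(L_i) into cl conv of the points Gamma_P^-1 (xi l) *)
  have := clconv_homothety (Ginv_ratio hr (prefw sigma i)) (Ginv_homothety hr _) Hy.
  rewrite (Ginv_Gamma hr); apply: clconv_least => _ [u [[l [Hl [Hne Hu]]] ->]].
  have -> : u = xi l by apply: functional_extensionality.
  apply: (cl_mono _ (Ginv_xi_in_cl_build Hi1 Hin Hl Hne)) => z.
  exact: conv_incl.
Qed.

End Proposition2.

Theorem proposition2 (r m : nat) (hr : (2 <= r)%nat) (hm : (1 <= m)%nat)
  (n : nat) (sigma : nat -> word r m) (Ls : nat -> lang r m) :
  set_eq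
    (cl (conv (xi_set (Lbuild sigma Ls n))))
    (cl (conv (set_union
       (xi_set (singleton_lang (prefw sigma n.+1)))
       (bigunion n (fun i =>
          Gamma_inv_set (prefw sigma i) (cl (conv (xi_set (Ls i))))))))).
Proof.
move=> x; split; apply: clconv_least.
- exact: xi_build_in_clconv_rhs.
- exact: rhs_in_clconv_xi_build.
Qed.
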